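(* For an idempotent semiring $S$ the following are equivalent: (1) $S$ satisfies $x+xyx\approx x$; (2) $\mathcal{D}^{\bullet}$ is a congruence on $S$ and $S/\mathcal{D}^{\bullet}\in\mathbf{LZ}^{+}\circ\mathbf{D}$.
   Context: An idempotent semiring is an algebra $(S,+,\cdot)$ with $(S,+)$, $(S,\cdot)$ bands and both distributive laws; addition not assumed commutative. $a\,\mathcal{D}^{\bullet}\,b$ iff $aba=a$ and $bab=b$. $\mathbf{D}$ is the variety of distributive lattices (idempotent semirings satisfying $x+y\approx y+x$, $xy\approx yx$, $x+xy\approx x$); $\mathbf{LZ}^{+}$ is the variety of idempotent semirings satisfying $x+y\approx x$. For classes $\mathbf{V},\mathbf{W}$ of idempotent semirings, the Mal'cev product $\mathbf{V}\circ\mathbf{W}$ is the class of idempotent semirings $S$ admitting a congruence $\rho$ with $S/\rho\in\mathbf{W}$ and every $\rho$-class (a subsemiring) belonging to $\mathbf{V}$. *)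

From Stdlib Require Import ClassicalEpsilon.

Set Implicit Arguments.

Section IdemSemiring.
Variable T : Type.
Variables add mul : T -> T -> T.

(** An idempotent semiring: (T,+) and (T,.) are bands, both distributive
    laws hold; addition is NOT assumed commutative. *)
Definition idem_semiring : Prop :=
  (forall x y z, add x (add y z) = add (add x y) z) /\
  (forall x, add x x = x) /\
  (forall x y z, mul x (mul y z) = mul (mul x y) z) /\
  (forall x, mul x x = x) /\
  (forall x y z, mul x (add y z) = add (mul x y) (mul x z)) /\
  (forall x y z, mul (add x y) z = add (mul x z) (mul y z)).

Definition congruence (r : T -> T -> Prop) : Prop :=
  (forall x, r x x) /\
  (forall x y, r x y -> r y x) /\
  (forall x y z, r x y -> r y z -> r x z) /\
  (forall x x' y y', r x x' -> r y y' -> r (add x y) (add x' y')) /\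
  (forall x x' y y', r x x' -> r y y' -> r (mul x y) (mul x' y')).

Definition Dbul (a b : T) : Prop :=
  mul (mul a b) a = a /\ mul (mul b a) b = b.

(** The variety D of distributive lattices. *)
Definition in_D : Prop :=
  idem_semiring /\
  (forall x y, add x y = add y x) /\
  (forall x y, mul x y = mul y x) /\
  (forall x y, add x (mul x y) = x).

Definition in_LZplus : Prop :=
  idem_semiring /\ (forall x y, add x y = x).

(** Quotient algebra S/r, carrier = set of r-classes. *)
Definition quot (r : T -> T -> Prop) : Type :=
  { P : T -> Prop | exists x, P = r x }.

Definition qcls (r : T -> T -> Prop) (x : T) : quot r :=
  exist _ (r x) (ex_intro _ x eq_refl).

Definition qrep (r : T -> T -> Prop) (A : quot r) : T :=
  proj1_sig (constructive_indefinite_description _ (proj2_sig A)).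

Definition qadd (r : T -> T -> Prop) (A B : quot r) : quot r :=
  qcls r (add (qrep A) (qrep B)).

Definition qmul (r : T -> T -> Prop) (A B : quot r) : quot r :=
  qcls r (mul (qrep A) (qrep B)).

Definition cls (r : T -> T -> Prop) (a : T) : Type := { x : T | r a x }.

Lemma cls_add_closed (r : T -> T -> Prop) :
  congruence r -> idem_semiring ->
  forall a x y, r a x -> r a y -> r a (add x y).
Proof.
  intros [Hrf [Hs [Ht [Ha Hm]]]] [_ [Hai _]] a x y Hx Hy.
  rewrite <- (Hai a) at 1. apply Ha; assumption.
Qed.

Lemma cls_mul_closed (r : T -> T -> Prop) :
  congruence r -> idem_semiring ->
  forall a x y, r a x -> r a y -> r a (mul x y).
Proof.
  intros [Hrf [Hs [Ht [Ha Hm]]]] [_ [_ [_ [Hmi _]]]] a x y Hx Hy.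
  rewrite <- (Hmi a) at 1. apply Hm; assumption.
Qed.

Definition cadd (r : T -> T -> Prop) (Hc : congruence r) (Hs : idem_semiring)
  (a : T) (x y : cls r a) : cls r a :=
  exist _ (add (proj1_sig x) (proj1_sig y))
    (cls_add_closed Hc Hs a _ _ (proj2_sig x) (proj2_sig y)).

Definition cmul (r : T -> T -> Prop) (Hc : congruence r) (Hs : idem_semiring)
  (a : T) (x y : cls r a) : cls r a :=
  exist _ (mul (proj1_sig x) (proj1_sig y))
    (cls_mul_closed Hc Hs a _ _ (proj2_sig x) (proj2_sig y)).

End IdemSemiring.

Definition sr_class := forall T : Type, (T -> T -> T) -> (T -> T -> T) -> Prop.

Definition malcev (V W : sr_class) (T : Type) (add mul : T -> T -> T) : Prop :=
  exists (Hs : idem_semiring add mul) (rho : T -> T -> Prop)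
         (Hc : congruence add mul rho),
    W (quot rho) (@qadd T add rho) (@qmul T mul rho) /\
    forall a : T, V (cls rho a) (@cadd T add mul rho Hc Hs a) (@cmul T add mul rho Hc Hs a).

Definition D_class : sr_class := fun T add mul => in_D add mul.
Definition LZplus_class : sr_class := fun T add mul => in_LZplus add mul.

From Stdlib Require Import ClassicalEpsilon ProofIrrelevance FunctionalExtensionality PropExtensionality.

(* (1) => (2): in the multiplicative band D is the composite of Green's relations R and L,
   and the identity x + xyx = x makes the translations t |-> t + c and t |-> c + t send
   R-related pairs (and, by left-right duality, L-related pairs) to D-related pairs; being
   always compatible with multiplication, D is then a congruence.  In S/D multiplication is
   commutative and x + xy = x, so the additive reduct is left regular and Green's L of
   (S/D, +) is a congruence whose quotient is a distributive lattice and whose classes are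
   left-zero for +.
   (2) => (1): modulo the lattice congruence, X + XYX is absorbed into the class of X, which
   is left-zero for +, so X + XYX = X in S/D; and x D (x + xyx) forces equality since
   x + xyx is fixed by multiplication with x on either side. *)

Set Implicit Arguments.

Definition opmul (T : Type) (mul : T -> T -> T) : T -> T -> T := fun x y => mul y x.

Definition band (T : Type) (mul : T -> T -> T) : Prop :=
  (forall a b c, mul a (mul b c) = mul (mul a b) c) /\ (forall a, mul a a = a).

Definition greenR (T : Type) (mul : T -> T -> T) (x y : T) : Prop :=
  mul x y = y /\ mul y x = x.

Definition greenL (T : Type) (mul : T -> T -> T) (x y : T) : Prop :=
  greenR (opmul mul) x y.

Definition xyx_absorbing (T : Type) (add mul : T -> T -> T) : Prop :=
  forall x y, add x (mul (mul x y) x) = x.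

Lemma band_opmul (T : Type) (mul : T -> T -> T) : band mul -> band (opmul mul).
Proof. intros [mulA mulI]; split; [intros; symmetry; apply mulA | apply mulI]. Qed.

Lemma Dbul_opmul (T : Type) (mul : T -> T -> T) (Hb : band mul) (a b : T) :
  Dbul (opmul mul) a b <-> Dbul mul a b.
Proof. unfold Dbul, opmul; rewrite !(proj1 Hb); tauto. Qed.

Lemma Dbul_sym (T : Type) (mul : T -> T -> T) (x y : T) : Dbul mul x y -> Dbul mul y x.
Proof. intros [H1 H2]; split; assumption. Qed.

Lemma greenR_sym (T : Type) (mul : T -> T -> T) (x y : T) : greenR mul x y -> greenR mul y x.
Proof. intros [H1 H2]; split; assumption. Qed.

Lemma greenR_Dbul (T : Type) (mul : T -> T -> T) (x y : T) : greenR mul x y -> Dbul mul x y.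
Proof. intros [Hxy Hyx]; split; rewrite ?Hxy, ?Hyx; auto. Qed.

Section Band.
Variables (T : Type) (mul : T -> T -> T).
Local Infix "*" := mul.
Hypothesis Hb : band mul.
Let mulA : forall a b c, a * (b * c) = a * b * c := proj1 Hb.
Let mulI : forall a, a * a = a := proj2 Hb.

Lemma Dbul_refl (x : T) : Dbul mul x x.
Proof. unfold Dbul; rewrite !mulI; split; reflexivity. Qed.

Lemma Dbul_trans (a b c : T) : Dbul mul a b -> Dbul mul b c -> Dbul mul a c.
Proof.
  assert (xyzyxyz : forall x y z, x * y * z * y * (x * y * z) = x * y * z).
  { intros x y z.
    transitivity (x * ((y * x * y * z) * (y * x * y * z))).
    { rewrite <- (mulI (x * y)) at 1. now rewrite !mulA. }
    rewrite mulI, !mulA, <- (mulA (x * y) x y), mulI. reflexivity. }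
  assert (half : forall a b c, Dbul mul a b -> Dbul mul b c -> a * c * a = a).
  { intros a' b' c' [Hab _] [Hbc _].
    assert (Ha : a' = a' * b' * c' * (b' * a')).
    { rewrite <- Hab at 1. rewrite <- Hbc at 1. now rewrite !mulA. }
    rewrite Ha at 1 2. rewrite xyzyxyz. symmetry; exact Ha. }
  intros Hab Hbc; split.
  - exact (half a b c Hab Hbc).
  - exact (half c b a (Dbul_sym Hbc) (Dbul_sym Hab)).
Qed.

Lemma greenR_mull (c x y : T) : greenR mul x y -> greenR mul (c * x) (c * y).
Proof.
  assert (half : forall x y, x * y = y -> c * x * (c * y) = c * y).
  { intros x' y' Hxy. rewrite <- Hxy at 1.
    rewrite (mulA c x' y'), (mulA (c * x') (c * x') y'), mulI, <- mulA, Hxy. reflexivity. }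
  intros [Hxy Hyx]; split; apply half; assumption.
Qed.

Lemma greenR_mulr_Dbul (c x y : T) : greenR mul x y -> Dbul mul (x * c) (y * c).
Proof.
  assert (half : forall x y, greenR mul x y -> x * c * (y * c) * (x * c) = x * c).
  { intros x' y' [Hxy Hyx].
    transitivity (x' * ((c * y') * (c * y')) * x' * c).
    { rewrite <- Hyx at 2. now rewrite !mulA. }
    rewrite mulI, !mulA, <- (mulA (x' * c) y' x'), Hyx, <- (mulA (x' * c) x' c), mulI.
    reflexivity. }
  intros H; split; apply half; [exact H | exact (greenR_sym H)].
Qed.

Lemma Dbul_greenR (a b : T) :
  Dbul mul a b -> greenR mul a (a * b) /\ greenL mul (a * b) b.
Proof.
  unfold greenL, greenR, opmul; intros [Hab Hba]; repeat split.
  - rewrite mulA, mulI; reflexivity.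
  - exact Hab.
  - rewrite mulA; exact Hba.
  - rewrite <- mulA, mulI; reflexivity.
Qed.

Lemma Dbul_map (F : T -> T) :
  (forall x y, greenR mul x y -> Dbul mul (F x) (F y)) ->
  (forall x y, greenL mul x y -> Dbul mul (F x) (F y)) ->
  forall a b, Dbul mul a b -> Dbul mul (F a) (F b).
Proof.
  intros HR HL a b Hab. destruct (Dbul_greenR Hab) as [HRab HLab].
  exact (Dbul_trans (HR _ _ HRab) (HL _ _ HLab)).
Qed.

Lemma Dbul_mulC (x y : T) : Dbul mul (x * y) (y * x).
Proof.
  assert (mul_idem_r : forall a b, a * b * b = a * b) by (intros; rewrite <- mulA, mulI; auto).
  split; rewrite !mulA, !mul_idem_r, <- mulA, mulI; reflexivity.
Qed.
End Band.

Section BandCongruence.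
Variables (T : Type) (mul : T -> T -> T).
Hypothesis Hb : band mul.

Lemma Dbul_mulr (c a b : T) : Dbul mul a b -> Dbul mul (mul a c) (mul b c).
Proof.
  apply (Dbul_map Hb (fun t => mul t c)); intros x y Hxy.
  - exact (greenR_mulr_Dbul Hb c Hxy).
  - apply (Dbul_opmul Hb), greenR_Dbul, (greenR_mull (band_opmul Hb) c Hxy).
Qed.

Lemma Dbul_mull (c a b : T) : Dbul mul a b -> Dbul mul (mul c a) (mul c b).
Proof.
  apply (Dbul_map Hb (fun t => mul c t)); intros x y Hxy.
  - exact (greenR_Dbul (greenR_mull Hb c Hxy)).
  - apply (Dbul_opmul Hb), (greenR_mulr_Dbul (band_opmul Hb) c Hxy).
Qed.
End BandCongruence.

Lemma idem_semiring_band (T : Type) (add mul : T -> T -> T) :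
  idem_semiring add mul -> band mul.
Proof. intros (_ & _ & mulA & mulI & _); split; assumption. Qed.

Lemma idem_semiring_opmul (T : Type) (add mul : T -> T -> T) :
  idem_semiring add mul -> idem_semiring add (opmul mul).
Proof.
  unfold opmul; intros (addA & addI & mulA & mulI & mulDl & mulDr).
  repeat split; intros; auto.
Qed.

Lemma xyx_absorbing_opmul (T : Type) (add mul : T -> T -> T) :
  band mul -> xyx_absorbing add mul -> xyx_absorbing add (opmul mul).
Proof. unfold xyx_absorbing, opmul; intros [mulA _] HI x y; rewrite mulA; apply HI. Qed.

Section XYXAbsorbing.
Variables (T : Type) (add mul : T -> T -> T).
Local Infix "+" := add.
Local Infix "*" := mul.
Hypothesis HS : idem_semiring add mul.
Hypothesis HI : xyx_absorbing add mul.
Let addA : forall a b c, a + (b + c) = a + b + c := proj1 HS.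
Let addI : forall a, a + a = a := proj1 (proj2 HS).
Let mulA : forall a b c, a * (b * c) = a * b * c := proj1 (proj2 (proj2 HS)).
Let mulI : forall a, a * a = a := proj1 (proj2 (proj2 (proj2 HS))).
Let mulDl : forall a b c, a * (b + c) = a * b + a * c := proj1 (proj2 (proj2 (proj2 (proj2 HS)))).
Let mulDr : forall a b c, (a + b) * c = a * c + b * c := proj2 (proj2 (proj2 (proj2 (proj2 HS)))).

Lemma add_mul_add (x y : T) : x + x * y + y = x + y.
Proof.
  assert (same_mul : forall a b, a * x = b * x -> a * y = b * y ->
                       a * (x + x * y + y) = b * (x + x * y + y)).
  { intros a b Hx Hy. rewrite !mulDl, !mulA, Hx, Hy. reflexivity. }
  assert (Hq : x + x * y + y = (x + y) * (x + x * y + y)).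
  { rewrite <- (mulI (x + x * y + y)) at 1. apply same_mul.
    - rewrite !mulDr, !mulI, HI. reflexivity.
    - rewrite !mulDr, <- mulA, !mulI, addI. reflexivity. }
  assert (Hxy : x * ((x + y) * y) = x * y).
  { rewrite mulDr, mulI, mulDl, mulA, mulI, addI. reflexivity. }
  rewrite Hq, !mulDl, <- Hxy, (mulA (x + y) x), <- addA.
  rewrite <- (mulI ((x + y) * y)) at 2.
  rewrite <- mulDr, <- mulDl, mulI, mulA, mulI, <- mulDl, mulI. reflexivity.
Qed.

Lemma greenR_add_mul (c x y : T) : greenR mul x y -> y + x * c = y + y * c.
Proof.
  (* With u := y + yc and w := y + xc: u + w = w, uw = w, and u + uw = u is y (s + sxs) = ys
     for s := y + c. *)
  intros [Hxy Hyx].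
  assert (Hw : y + y * c + x * c = y + x * c).
  { pose proof (f_equal (mul x) (add_mul_add y c)) as H.
    rewrite !mulDl, mulA, Hxy in H. exact H. }
  assert (add_uw : y + y * c + (y + x * c) = y + x * c).
  { rewrite <- Hw at 1. rewrite addA, addI. exact Hw. }
  assert (mul_uw : (y + y * c) * (y + x * c) = y + x * c).
  { assert (Hy : y * (y + x * c) = y + x * c) by (rewrite mulDl, mulI, mulA, Hyx; reflexivity).
    rewrite <- Hy at 1. rewrite mulA, mulDr, mulI, HI. exact Hy. }
  assert (HIu : y + y * c + (y + y * c) * (y + x * c) = y + y * c).
  { pose proof (f_equal (mul y) (HI (y + c) x)) as H.
    rewrite mulDl, !mulA, (mulDl y y c), mulI, <- (mulA (y + y * c) x), mulDl, Hxy in H.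
    exact H. }
  rewrite mul_uw, add_uw in HIu. exact HIu.
Qed.

Lemma greenR_addr (c x y : T) : greenR mul x y -> greenR mul (x + c) (y + c).
Proof.
  assert (half : forall x y, greenR mul x y -> (x + c) * (y + c) = y + c).
  { intros x' y' Hxy.
    rewrite (mulDr x' c), (mulDl x' y' c), (proj1 Hxy), (greenR_add_mul c Hxy).
    rewrite <- (mulI y') at 1. rewrite <- mulDl, <- mulDr. apply mulI. }
  intros H; split; apply half; [exact H | exact (greenR_sym H)].
Qed.

Lemma greenR_addl_Dbul (c x y : T) : greenR mul x y -> Dbul mul (c + x) (c + y).
Proof.
  assert (half : forall x y, greenR mul x y -> (c + y) * (c + x) * (c + y) = c + y).
  { intros x' y' Hxy.
    assert (mul_cx_cy : (c + x') * (c + y') = c + (x' * c + y')).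
    { rewrite <- (add_mul_add c (x' * c + y')), (mulDl c (x' * c) y'), (mulA c x' c).
      rewrite (addA c (c * x' * c)), HI.
      rewrite mulDr, !mulDl, mulI, (proj1 Hxy), !addA. reflexivity. }
    assert (yc_xc : y' * c + x' * c = y' * c).
    { pose proof (f_equal (fun t => t * c) (greenR_add_mul c Hxy)) as H; simpl in H.
      rewrite !mulDr, <- !mulA, mulI, addI in H. exact H. }
    rewrite <- mulA, mul_cx_cy, mulDr, !mulDl, !mulI, !mulA, (proj2 Hxy).
    rewrite (addA c (c * x' * c)), HI, (addA (y' * c) (x' * c) y'), yc_xc.
    rewrite <- (mulI (c + y')) at 1. rewrite mulDr, !mulDl, !mulI. reflexivity. }
  intros H; split; apply half; [exact (greenR_sym H) | exact H].
Qed.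

Lemma Dbul_add_mul (x y : T) : Dbul mul (x + x * y) x.
Proof.
  assert (Hr : (x + x * y) * x = x) by (rewrite mulDr, mulI; apply HI).
  assert (Hl : x * (x + x * y) = x + x * y) by (rewrite mulDl, mulI, mulA, mulI; reflexivity).
  split; [rewrite Hr, Hl | rewrite Hl, Hr]; reflexivity.
Qed.
End XYXAbsorbing.

Section DbulCongruence.
Variables (T : Type) (add mul : T -> T -> T).
Hypothesis HS : idem_semiring add mul.
Hypothesis HI : xyx_absorbing add mul.
Let Hb : band mul := idem_semiring_band HS.
Let HSop : idem_semiring add (opmul mul) := idem_semiring_opmul HS.
Let HIop : xyx_absorbing add (opmul mul) := xyx_absorbing_opmul Hb HI.

Lemma Dbul_addr (c a b : T) : Dbul mul a b -> Dbul mul (add a c) (add b c).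
Proof.
  apply (Dbul_map Hb (fun t => add t c)); intros x y Hxy.
  - exact (greenR_Dbul (greenR_addr HS HI c Hxy)).
  - apply (Dbul_opmul Hb), greenR_Dbul, (greenR_addr HSop HIop c Hxy).
Qed.

Lemma Dbul_addl (c a b : T) : Dbul mul a b -> Dbul mul (add c a) (add c b).
Proof.
  apply (Dbul_map Hb (fun t => add c t)); intros x y Hxy.
  - exact (greenR_addl_Dbul HS HI c Hxy).
  - apply (Dbul_opmul Hb), (greenR_addl_Dbul HSop HIop c Hxy).
Qed.

Lemma Dbul_congruence : congruence add mul (Dbul mul).
Proof.
  split; [|split; [|split; [|split]]].
  - apply (Dbul_refl Hb).
  - apply Dbul_sym.
  - apply (Dbul_trans Hb).
  - intros x x' y y' Hx Hy. exact (Dbul_trans Hb (Dbul_addr y Hx) (Dbul_addl x' Hy)).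
  - intros x x' y y' Hx Hy. exact (Dbul_trans Hb (Dbul_mulr Hb y Hx) (Dbul_mull Hb x' Hy)).
Qed.
End DbulCongruence.

Lemma proj1_sig_inj (A : Type) (P : A -> Prop) (u v : sig P) :
  proj1_sig u = proj1_sig v -> u = v.
Proof. apply eq_sig_hprop; intros; apply proof_irrelevance. Qed.

Lemma qcls_qrep (T : Type) (r : T -> T -> Prop) (A : quot r) : qcls r (qrep A) = A.
Proof.
  apply proj1_sig_inj; simpl; unfold qrep.
  destruct (constructive_indefinite_description _ _) as [x Hx]; symmetry; exact Hx.
Qed.

Lemma quot_ind (T : Type) (r : T -> T -> Prop) (P : quot r -> Prop) :
  (forall x, P (qcls r x)) -> forall A, P A.
Proof. intros H A; rewrite <- (qcls_qrep A); apply H. Qed.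

Section Quotient.
Variables (T : Type) (add mul : T -> T -> T) (r : T -> T -> Prop).
Hypothesis Hc : congruence add mul r.

Lemma qcls_eq (x y : T) : qcls r x = qcls r y <-> r x y.
Proof.
  destruct Hc as (r_refl & r_sym & r_trans & _).
  split.
  - intros H. apply (f_equal (@proj1_sig _ _)) in H; simpl in H.
    rewrite H; apply r_refl.
  - intros Hxy. apply proj1_sig_inj; simpl.
    apply functional_extensionality; intros z; apply propositional_extensionality.
    split; eauto.
Qed.

Lemma qrep_qcls (x : T) : r (qrep (qcls r x)) x.
Proof. apply qcls_eq, qcls_qrep. Qed.

Lemma qadd_qcls (x y : T) : qadd add (qcls r x) (qcls r y) = qcls r (add x y).
Proof. apply qcls_eq, (proj1 (proj2 (proj2 (proj2 Hc)))); apply qrep_qcls. Qed.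

Lemma qmul_qcls (x y : T) : qmul mul (qcls r x) (qcls r y) = qcls r (mul x y).
Proof. apply qcls_eq, (proj2 (proj2 (proj2 (proj2 Hc)))); apply qrep_qcls. Qed.

Lemma idem_semiring_quot :
  idem_semiring add mul -> idem_semiring (qadd add (r:=r)) (qmul mul (r:=r)).
Proof.
  intros (addA & addI & mulA & mulI & mulDl & mulDr); repeat split; intros;
    repeat match goal with X : quot r |- _ => induction X using quot_ind end;
    rewrite ?qadd_qcls, ?qmul_qcls, ?qadd_qcls, ?qmul_qcls; f_equal; auto.
Qed.

Lemma idem_semiring_cls (HS : idem_semiring add mul) (a : T) :
  idem_semiring (cadd Hc HS (a:=a)) (cmul Hc HS (a:=a)).
Proof.
  pose proof HS as (addA & addI & mulA & mulI & mulDl & mulDr).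
  repeat split; intros; apply proj1_sig_inj; simpl; auto.
Qed.
End Quotient.

Section LatticeLaws.
Variables (U : Type) (add mul : U -> U -> U).
Local Infix "+" := add.
Local Infix "*" := mul.
Hypothesis HS : idem_semiring add mul.
Hypothesis mulC : forall x y, x * y = y * x.
Hypothesis add_mul : forall x y, x + x * y = x.
Let addA : forall a b c, a + (b + c) = a + b + c := proj1 HS.
Let addI : forall a, a + a = a := proj1 (proj2 HS).
Let mulI : forall a, a * a = a := proj1 (proj2 (proj2 (proj2 HS))).
Let mulDl : forall a b c, a * (b + c) = a * b + a * c := proj1 (proj2 (proj2 (proj2 (proj2 HS)))).
Let mulDr : forall a b c, (a + b) * c = a * c + b * c := proj2 (proj2 (proj2 (proj2 (proj2 HS)))).

Lemma add_left_regular (a b : U) : a + b + a = a + b.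
Proof.
  assert (Ha : (a + b) * a = a).
  { rewrite mulC, mulDl, mulI, add_mul. reflexivity. }
  rewrite <- Ha at 2. apply add_mul.
Qed.

Lemma greenL_add_congruence : congruence add mul (greenL add).
Proof.
  unfold greenL, greenR, opmul.
  assert (add_half : forall a a' b b', a' + a = a' -> a + a' = a -> b' + b = b' -> b + b' = b ->
                       a + b + (a' + b') = a + b).
  { intros a a' b b' _ Ha _ Hb.
    rewrite addA, <- (add_left_regular a b) at 1.
    rewrite <- (addA (a + b) a a'), Ha, add_left_regular, <- addA, Hb. reflexivity. }
  assert (mul_half : forall a a' b b', a + a' = a -> b + b' = b -> a * b + a' * b' = a * b).
  { intros a a' b b' Ha Hb.
    assert (E : a * b = a * b + a * b' + a' * b + a' * b').
    { rewrite <- Ha at 1. rewrite <- Hb at 1. rewrite mulDr, !mulDl, addA. reflexivity. }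
    rewrite E at 1. rewrite <- addA, addI. symmetry; exact E. }
  split; [|split; [|split; [|split]]].
  - intros x; split; apply addI.
  - intros x y [H1 H2]; split; assumption.
  - intros x y z [Hyx Hxy] [Hzy Hyz]; split.
    + rewrite <- Hzy at 1. rewrite <- addA, Hyx. exact Hzy.
    + rewrite <- Hxy at 1. rewrite <- addA, Hyz. exact Hxy.
  - intros x x' y y' [H1 H2] [H3 H4]; split; apply add_half; assumption.
  - intros x x' y y' [H1 H2] [H3 H4]; split; apply mul_half; assumption.
Qed.

Lemma malcev_LZplus_D_of_lattice_laws : malcev LZplus_class D_class add mul.
Proof.
  pose proof greenL_add_congruence as Hc.
  exists HS, (greenL add), Hc; split.
  - split; [exact (idem_semiring_quot Hc HS) | split; [| split]];
      intros X Y; induction X using quot_ind; induction Y using quot_ind;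
      rewrite ?(qadd_qcls Hc), ?(qmul_qcls Hc), ?(qadd_qcls Hc).
    + assert (H : forall a b, a + b + (b + a) = a + b).
      { intros a b. rewrite addA, <- (addA a b b), addI. apply add_left_regular. }
      apply (qcls_eq Hc); split; apply H.
    + rewrite mulC; reflexivity.
    + rewrite add_mul; reflexivity.
  - intros a; split; [exact (idem_semiring_cls Hc HS a) |].
    intros [u Hu] [v Hv]; apply proj1_sig_inj; simpl.
    destruct Hc as (_ & L_sym & L_trans & _).
    exact (proj2 (L_trans u a v (L_sym a u Hu) Hv)).
Qed.
End LatticeLaws.

Section DbulQuotient.
Variables (T : Type) (add mul : T -> T -> T).
Hypothesis HS : idem_semiring add mul.
Hypothesis Hc : congruence add mul (Dbul mul).

Lemma quot_Dbul_mulC (X Y : quot (Dbul mul)) : qmul mul X Y = qmul mul Y X.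
Proof.
  induction X using quot_ind; induction Y using quot_ind.
  rewrite !(qmul_qcls Hc). apply (qcls_eq Hc), (Dbul_mulC (idem_semiring_band HS)).
Qed.

Lemma quot_Dbul_add_mul (HI : xyx_absorbing add mul) (X Y : quot (Dbul mul)) :
  qadd add X (qmul mul X Y) = X.
Proof.
  induction X using quot_ind; induction Y using quot_ind.
  rewrite (qmul_qcls Hc), (qadd_qcls Hc). apply (qcls_eq Hc), (Dbul_add_mul HS HI).
Qed.

Lemma xyx_absorbing_of_malcev :
  malcev LZplus_class D_class (qadd add (r:=Dbul mul)) (qmul mul (r:=Dbul mul)) ->
  xyx_absorbing add mul.
Proof.
  intros (HSq & rho & Hrho & HD & HLZ) x y.
  (* W := X + X(YX) is rho-related to X by lattice absorption, and + is left-zero on the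
     rho-class of X. *)
  set (X := qcls (Dbul mul) x).
  set (W := qadd add X (qmul mul X (qmul mul (qcls (Dbul mul) y) X))).
  assert (rho_XW : rho X W).
  { apply (qcls_eq Hrho). destruct HD as (_ & _ & _ & absorb).
    rewrite <- (absorb (qcls rho X) (qcls rho (qmul mul (qcls (Dbul mul) y) X))).
    rewrite (qmul_qcls Hrho), (qadd_qcls Hrho). reflexivity. }
  assert (XW : qadd add X W = X).
  { destruct (HLZ X) as [_ left_zero].
    exact (f_equal (@proj1_sig _ _) (left_zero (exist _ X (proj1 Hrho X)) (exist _ W rho_XW))). }
  assert (WX : W = X).
  { rewrite <- XW. unfold W. pose proof HSq as (qaddA & qaddI & _).
    rewrite qaddA, qaddI. reflexivity. }
  unfold W, X in WX. rewrite !(qmul_qcls Hc), (qadd_qcls Hc) in WX.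
  destruct (proj1 (qcls_eq Hc _ _) WX) as [_ Hx].
  pose proof HS as (_ & _ & mulA & mulI & mulDl & mulDr).
  rewrite mulDl, mulI, !mulA, mulI, mulDr, mulI, <- (mulA (mul x y) x x), mulI in Hx.
  exact Hx.
Qed.
End DbulQuotient.

Theorem lemma4p2 (T : Type) (add mul : T -> T -> T)
  (HS : idem_semiring add mul) :
  (forall x y : T, add x (mul (mul x y) x) = x) <->
  (congruence add mul (Dbul mul) /\
   @malcev LZplus_class D_class
     (quot (Dbul mul)) (@qadd T add (Dbul mul)) (@qmul T mul (Dbul mul))).
Proof.
  split.
  - intros HI.
    pose proof (Dbul_congruence HS HI) as Hc.
    split; [exact Hc |].
    apply malcev_LZplus_D_of_lattice_laws.
    + exact (idem_semiring_quot Hc HS).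
    + exact (quot_Dbul_mulC HS Hc).
    + exact (quot_Dbul_add_mul HS Hc HI).
  - intros [Hc HM]. exact (xyx_absorbing_of_malcev HS Hc HM).
Qed.
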